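(* For every finite set $N$, the Ingleton region $\mathbf{H}_N^{\mathrm{Ingl}}$ is closed under duality: if $h\in\mathbf{H}_N^{\mathrm{Ingl}}$ then $h^\perp\in\mathbf{H}_N^{\mathrm{Ingl}}$.
   Context: Vectors $h$ are real functions on subsets of the finite set $N$ with $h(\varnothing)=0$, and the dual of $h$ is $h^\perp(J)=h(N\setminus J)-h(N)+\sum_{j\in J}h(\{j\})$. For a prime power $q$, a finite-dimensional vector space $V$ over $\mathrm{GF}(q)$ and subspaces $V_i\subseteq V$ ($i\in N$), let $V_J$ be the sum of the subspaces $V_i$, $i\in J$; the point $(\log q\cdot \dim V_J)_{\varnothing\ne J\subseteq N}$ is called a linearly representable vector. The Ingleton region $\mathbf{H}_N^{\mathrm{Ingl}}$ is the closure of the set of all such points (over all $q$, $V$, and choices of subspaces). *)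

From HB Require Import structures.
From mathcomp Require Import all_boot all_algebra all_field.
From Stdlib Require Import Reals.
Set Implicit Arguments. Unset Strict Implicit. Unset Printing Implicit Defensive.

(* A vector h : real function on subsets of N (h set0 = 0 is imposed where needed). *)
Definition setvec (N : finType) := {set N} -> R.

Definition dualvec (N : finType) (h : setvec N) : setvec N :=
  fun J => Rplus (Rminus (h (~: J)) (h setT)) (\big[Rplus/0%R]_(j in J) h [set j]).

Definition lin_rep (N : finType) (h : setvec N) : Prop :=
  exists (F : finFieldType) (V : vectType F) (Vs : N -> {vspace V}),
    forall J : {set N},
      h J = Rmult (ln (INR #|F|)) (INR (\dim (\sum_(i in J) Vs i)%VS)).

(* Ingleton region: closure (in R^{nonempty subsets}) of the linearly
   representable vectors, viewed as functions with h(set0) = 0. *)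
Definition ingleton_region (N : finType) (h : setvec N) : Prop :=
  h set0 = 0%R /\
  forall eps : R, (0 < eps)%R ->
    exists g : setvec N, lin_rep g /\
      forall J : {set N}, J != set0 -> (Rabs (Rminus (h J) (g J)) < eps)%R.

From HB Require Import structures.
From mathcomp Require Import all_boot all_algebra all_field.
From mathcomp Require Import zify.
From Stdlib Require Import Reals Lra.
Import GRing.Theory VectorInternalTheory.
Set Implicit Arguments. Unset Strict Implicit. Unset Printing Implicit Defensive.

(* Linear matroid duality. Write r(J) = dim V_J and stack bases of all the V_i
   as the rows of a matrix C with t = sum_i r({i}) rows, and let K be the
   left kernel {x in F^t | x C = 0}, of dimension t - r(N). Let U_i be the
   projection of K onto the coordinates of block i. The projection of K onto
   the coordinates of J has kernel the left kernel of the rows of C outside J,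
   of dimension sum_(i notin J) r({i}) - r(N \ J), so dim U_J = r(N \ J) - r(N)
   + sum_(j in J) r({j}), i.e. the dual of a representable vector is representable
   over the same field. The dual map is (|N| + 2)-Lipschitz in the sup norm,
   so it also preserves the closure. *)

Section LinearDuality.
Local Open Scope ring_scope.

Lemma card_tag_in (I : finType) (T_ : I -> finType) (K : {set I}) :
  #|[set x : {i : I & T_ i} | tag x \in K]| = (\sum_(i in K) #|T_ i|)%nat.
Proof.
rewrite -sum1_card (partition_big (@tag I T_) (mem K)) => [|x]; last by rewrite inE.
apply: eq_bigr => i Ki; rewrite sum1_card.
rewrite -cardsT -(card_imset [set: T_ i] (@eq_from_Tagged _ _ i)); apply: eq_card => x.
rewrite [in LHS]unfold_in !inE; apply/andP/imsetP => [[_ /eqP <-]|[y _ ->]]; last by split.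
by exists (tagged x); rewrite ?inE // -[x in LHS](etaggedK (erefl (tag x))).
Qed.

Lemma mxrank_diag_indicator (F : fieldType) n (S : {set 'I_n}) :
  \rank (diag_mx (\row_a ((a \in S)%:R)) : 'M[F]_n) = #|S|.
Proof.
set D := diag_mx _; pose E : 'M[F]_(#|S|, n) := \matrix_k 'e_(enum_val k).
have eqDE : (D :=: E)%MS.
  apply/eqmxP/andP; split; apply/row_subP.
    move=> a; rewrite row_diag_mx mxE.
    have [aS|_] := boolP (a \in S); last by rewrite scale0r sub0mx.
    by rewrite scale1r -(enum_rankK_in aS aS) -(rowK (fun k => 'e_(enum_val k))) row_sub.
  move=> k; have := row_sub (enum_val k) D.
  by rewrite row_diag_mx mxE (enum_valP k) scale1r rowK.
rewrite eqDE; apply/eqP/row_freeP; exists E^T; apply/matrixP => k l.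
rewrite !mxE (bigD1 (enum_val k)) //= big1 ?addr0 => [|a /negPf ak]; last first.
  by rewrite !mxE ak mul0r.
by rewrite !mxE !eqxx mul1r (inj_eq enum_val_inj).
Qed.

Section DualFamily.
Variables (F : fieldType) (N : finType) (d : nat) (A : N -> 'M[F]_d).
Implicit Types K L J : {set N}.

Definition basis_vector := {i : N & 'I_(\rank (A i))}.
Definition nbasis := #|{: basis_vector}|.
Definition coord_block (a : 'I_nbasis) : N := tag (enum_val a).
Definition block_coords (K : {set N}) : {set 'I_nbasis} :=
  [set a | coord_block a \in K].
Definition block_proj (K : {set N}) : 'M[F]_nbasis :=
  diag_mx (\row_a ((a \in block_coords K)%:R)).
Definition stacked_bases : 'M[F]_(nbasis, d) :=
  \matrix_a row (tagged (enum_val a)) (row_base (A (coord_block a))).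
(* Rows index the coordinates of F^nbasis, columns a basis of the left kernel
   of [stacked_bases]; the row space is the projection of that kernel onto
   block [i]. *)
Definition dual_block (i : N) : 'M[F]_nbasis :=
  block_proj [set i] *m (kermx stacked_bases)^T.

Lemma card_block_coords K : #|block_coords K| = (\sum_(i in K) \rank (A i))%nat.
Proof.
rewrite -(eq_bigr _ (fun i _ => card_ord (\rank (A i)))) -card_tag_in.
have -> : block_coords K = enum_val @^-1: [set x : basis_vector | tag x \in K].
  by apply/setP => a; rewrite !inE.
by apply: on_card_preimset; apply: onW_bij; exact: enum_val_bij.
Qed.

Lemma mxrank_block_proj K : \rank (block_proj K) = (\sum_(i in K) \rank (A i))%nat.
Proof. by rewrite mxrank_diag_indicator card_block_coords. Qed.

Lemma block_projM K L : block_proj K *m block_proj L = block_proj (K :&: L).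
Proof.
by apply/matrixP => a b; rewrite mul_diag_mx !mxE !inE mulrnAr -natrM mulnb.
Qed.

Lemma block_projT : block_proj setT = 1%:M.
Proof. by apply/matrixP => a b; rewrite !mxE !inE. Qed.

Lemma block_projC K : block_proj K + block_proj (~: K) = 1%:M.
Proof.
apply/matrixP => a b; rewrite !mxE !inE.
by case: (coord_block a \in K); case: (a == b); rewrite /= ?addr0 ?add0r.
Qed.

Lemma sum_block_proj J : \sum_(i in J) block_proj [set i] = block_proj J.
Proof.
apply/matrixP => a b; rewrite summxE !mxE.
under eq_bigr => i _ do rewrite !mxE !inE.
rewrite sumrMnl inE; congr (_ *+ _); have [aJ|aJ] := boolP (coord_block a \in J).
  rewrite (bigD1 (coord_block a)) //= eqxx big1 ?addr0 // => i /andP[_].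
  by rewrite eq_sym => /negPf ->.
by rewrite big1 // => i iJ; case: eqP iJ aJ => // <- ->.
Qed.

Lemma block_proj_stacked_bases K :
  (block_proj K *m stacked_bases :=: \sum_(i in K) A i)%MS.
Proof.
have row_projE a : row a (block_proj K *m stacked_bases) =
    if coord_block a \in K
    then row (tagged (enum_val a)) (row_base (A (coord_block a))) else 0.
  rewrite row_mul row_diag_mx -scalemxAl -rowE rowK mxE inE.
  by case: ifP => _; rewrite ?scale1r ?scale0r.
apply/eqmxP/andP; split.
  apply/row_subP => a; rewrite row_projE; case: ifP => aK; last exact: sub0mx.
  apply: (sumsmx_sup (coord_block a)) => //.
  by rewrite (submx_trans (row_sub _ _)) ?eq_row_base.
apply/sumsmx_subP => i iK; rewrite -(eq_row_base (A i)); apply/row_subP => k.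
pose a := enum_rank (Tagged (fun j => 'I_(\rank (A j))) k).
have := row_sub a (block_proj K *m stacked_bases).
by rewrite row_projE /coord_block enum_rankK /= iK.
Qed.

Lemma kermx_block_proj K : (kermx (block_proj K) :=: block_proj (~: K))%MS.
Proof.
apply/eqmxP/andP; split.
  have -> : kermx (block_proj K) = kermx (block_proj K) *m block_proj (~: K).
    have := congr1 (mulmx (kermx (block_proj K))) (block_projC K).
    by rewrite mulmx1 mulmxDr mulmx_ker add0r.
  exact: submxMl.
apply/sub_kermxP; rewrite block_projM setIC setICr.
by apply/matrixP => a b; rewrite !mxE !inE mul0rn.
Qed.

Lemma mxrank_sum_dual_block J :
  \rank (\sum_(i in J) dual_block i)%MS = \rank (kermx stacked_bases *m block_proj J).
Proof.
rewrite -[RHS]mxrank_tr trmx_mul tr_diag_mx -/(block_proj J); apply/eqmx_rank/andP; split.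
  apply/sumsmx_subP => i iJ; rewrite /dual_block.
  have -> : block_proj [set i] = block_proj [set i] *m block_proj J.
    by rewrite block_projM; congr block_proj; apply/setP => j; rewrite !inE; case: eqP => // ->.
  by rewrite -mulmxA submxMl.
by rewrite -sum_block_proj mulmx_suml; apply: summx_sub_sums => i _; exact: submx_refl.
Qed.

Lemma mxrank_dual_block J :
  (\rank (\sum_(i in J) dual_block i)%MS + \rank (\sum_(i in setT) A i)%MS =
   \rank (\sum_(i in ~: J) A i)%MS + \sum_(i in J) \rank (A i))%nat.
Proof.
rewrite mxrank_sum_dual_block; set C := stacked_bases; set B := kermx C.
have rankC : \rank C = \rank (\sum_(i in setT) A i)%MS.
  by rewrite -(block_proj_stacked_bases setT) block_projT mul1mx.
have rankBJ := mxrank_mul_ker B (block_proj J).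
have rankCJ := mxrank_mul_ker (block_proj (~: J)) C.
have capBJ : \rank (B :&: kermx (block_proj J))%MS =
             \rank (block_proj (~: J) :&: kermx C)%MS.
  by rewrite capmxC (cap_eqmx (kermx_block_proj J) (eqmx_refl B)).
have nbasisE : nbasis = (\sum_(i in J) \rank (A i) + \sum_(i in ~: J) \rank (A i))%nat.
  rewrite -!card_block_coords.
  have -> : block_coords (~: J) = ~: block_coords J by apply/setP => a; rewrite !inE.
  by rewrite cardsC card_ord.
move: rankBJ rankCJ capBJ nbasisE (rank_leq_row C).
by rewrite mxrank_ker rankC mxrank_block_proj (block_proj_stacked_bases (~: J)); lia.
Qed.

(* Stated for any [n = nbasis], since the dimension [1 * nbasis] of
   ['rV_nbasis] is not convertible to [nbasis]. *)
Lemma exists_dual_family n : n = nbasis ->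
  exists U : N -> 'M[F]_n, forall J,
    (\rank (\sum_(i in J) U i)%MS + \rank (\sum_(i in setT) A i)%MS =
     \rank (\sum_(i in ~: J) A i)%MS + \sum_(i in J) \rank (A i))%nat.
Proof. by move=> ->; exists dual_block; exact: mxrank_dual_block. Qed.

End DualFamily.

Lemma dimv_sum (F : fieldType) (vT : vectType F) (I : finType)
    (Vs : I -> {vspace vT}) (J : {set I}) :
  \dim (\sum_(i in J) Vs i)%VS = \rank (\sum_(i in J) vs2mx (Vs i))%MS.
Proof.
rewrite /dimv; apply/eqmx_rank/eqmxP; elim/big_rec2: _ => [|i M U _ eqUM].
  by rewrite /= linear0 genmx0.
exact: eqmx_trans (genmxE _) (adds_eqmx (eqmx_refl _) eqUM).
Qed.

End LinearDuality.

Local Open Scope R_scope.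

Lemma INR_big_add (I : finType) (P : pred I) (c : I -> nat) :
  INR (\sum_(i | P i) c i)%nat = \big[Rplus/0]_(i | P i) INR (c i).
Proof. exact: (big_morph _ plus_INR). Qed.

Lemma big_Rmult_l (I : finType) (P : pred I) (c : R) (x : I -> R) :
  \big[Rplus/0]_(i | P i) (c * x i) = c * \big[Rplus/0]_(i | P i) x i.
Proof. by elim/big_rec2: _ => [|i a b _ ->]; ring. Qed.

Lemma Rabs_big_sub_le (I : finType) (J : {set I}) (a b : I -> R) (e : R) :
  (forall i, Rabs (a i - b i) <= e) ->
  Rabs (\big[Rplus/0]_(i in J) a i - \big[Rplus/0]_(i in J) b i) <= INR #|J| * e.
Proof.
move=> abE; rewrite -sum1_card INR_big_add Rmult_comm -big_Rmult_l /=.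
elim/big_rec3: _ => [|i s t u _ IH]; first by rewrite Rminus_0_r Rabs_R0; lra.
have := abE i; have := Rabs_triang (a i - b i) (u - t).
by replace (a i + u - (b i + t)) with (a i - b i + (u - t)) by ring; lra.
Qed.

Lemma lin_rep0 (N : finType) (g : setvec N) : lin_rep g -> g set0 = 0.
Proof. by case=> F [V [Vs ->]]; rewrite big_set0 dimv0 Rmult_0_r. Qed.

Lemma lin_rep_dual (N : finType) (g : setvec N) :
  lin_rep g -> lin_rep (dualvec g).
Proof.
case=> F [V [Vs gE]]; pose A i := vs2mx (Vs i).
have [U UE] := @exists_dual_family F N _ A (dim 'rV[F]_(nbasis A)) (mul1n _).
exists F, 'rV[F]_(nbasis A), (fun i => mx2vs (U i)) => J.
have dimU : \dim (\sum_(i in J) mx2vs (U i))%VS = \rank (\sum_(i in J) U i)%MS.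
  by rewrite dimv_sum; apply/eqmx_rank/eqmxP/eqmx_sums => i _; exact: mx2vsK.
rewrite dimU /dualvec !gE !dimv_sum.
under eq_bigr => j _ do rewrite gE big_set1 /dimv.
rewrite big_Rmult_l -INR_big_add.
set x := INR (\rank (\sum_(i in J) U i)%MS).
set a := INR (\rank (\sum_(i in ~: J) vs2mx (Vs i))%MS).
set b := INR (\rank (\sum_(i in setT) vs2mx (Vs i))%MS).
set s := INR (\sum_(i in J) \rank (vs2mx (Vs i)))%nat.
have rankE : x + b = a + s by rewrite -!plus_INR; exact (congr1 INR (UE J)).
by rewrite (_ : x = a - b + s); [ring | lra].
Qed.

Lemma dualvec_near (N : finType) (h g : setvec N) (e : R) :
  (forall K, Rabs (h K - g K) < e) ->
  forall J, Rabs (dualvec h J - dualvec g J) < (INR #|N| + 2) * e.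
Proof.
move=> hgE J; rewrite /dualvec.
set sh := \big[Rplus/0]_(j in J) h [set j]; set sg := \big[Rplus/0]_(j in J) g [set j].
have singlesE : Rabs (sh - sg) <= INR #|J| * e.
  exact: Rabs_big_sub_le (fun j => Rlt_le _ _ (hgE [set j])).
have cardJ : INR #|J| * e <= INR #|N| * e.
  apply: Rmult_le_compat_r.
    by have := hgE set0; have := Rabs_pos (h set0 - g set0); lra.
  by apply/le_INR/leP; exact: max_card.
have := hgE (~: J); have := hgE setT.
have := Rabs_triang (h (~: J) - g (~: J)) (- (h setT - g setT) + (sh - sg)).
have := Rabs_triang (- (h setT - g setT)) (sh - sg); rewrite Rabs_Ropp.
by replace (h (~: J) - h setT + sh - (g (~: J) - g setT + sg))
  with (h (~: J) - g (~: J) + (- (h setT - g setT) + (sh - sg))) by ring; lra.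
Qed.

Theorem mainTheorem4 (N : finType) (h : setvec N) :
  ingleton_region h -> ingleton_region (dualvec h).
Proof.
case=> h0 hE; split; first by rewrite /dualvec setC0 big_set0; ring.
move=> eps eps_gt0; have N_ge0 := pos_INR #|N|.
set e := eps / (INR #|N| + 2); have e_gt0 : 0 < e by apply: Rdiv_lt_0_compat; lra.
have [g [g_lin g_near]] := hE e e_gt0.
have near_all K : Rabs (h K - g K) < e.
  have [->|/g_near //] := eqVneq K set0.
  by rewrite h0 (lin_rep0 g_lin) Rminus_0_r Rabs_R0.
exists (dualvec g); split=> [|J _]; first exact: lin_rep_dual.
have -> : eps = (INR #|N| + 2) * e by rewrite /e; field; lra.
exact: dualvec_near.
Qed.
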